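(* Let $P,R,Q$ be polytopes with $R\subset Q$, and let $m\ge2$. (a) If $f\in\operatorname{vert}(P,Q)$ and $f(P)\subset R$, then $f\in\operatorname{vert}(P,R)$. (b) If $P$ is centrally symmetric, $f\in\operatorname{vert}(\Diamond_m,P)$ and $f(0)$ is the center of $P$, then $f(\operatorname{vert}(\Diamond_m))\subset\operatorname{vert}(P)$. (c) If $f\in\operatorname{vert}(\Diamond_m,P)$, then $f(\operatorname{vert}(\Diamond_m))=\operatorname{vert}(f(\Diamond_m))\subset\operatorname{vert}\big(P\cap(2f(0)-P)\big)$.
   Context: For convex polytopes $P,Q$, $\operatorname{Hom}(P,Q)$ is the set of maps $P\to Q$ that are restrictions of affine maps $\operatorname{Aff}(P)\to\operatorname{Aff}(Q)$; it is a convex polytope in the affine space of affine maps $\operatorname{Aff}(P)\to\operatorname{Aff}(Q)$, and $\operatorname{vert}(P,Q)$ denotes its set of vertices. $\operatorname{vert}(X)$ denotes the vertex set of a polytope $X$. $\Diamond_m=\operatorname{conv}(\pm e_1,\ldots,\pm e_m)\subset\mathbb{R}^m$, and $2f(0)-P=\{2f(0)-x:x\in P\}$. *)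

From HB Require Import structures.
From mathcomp Require Import all_boot all_order all_algebra.
From mathcomp Require Import boolp classical_sets reals.
Set Implicit Arguments. Unset Strict Implicit. Unset Printing Implicit Defensive.
Import Order.TTheory GRing.Theory Num.Theory.
Local Open Scope ring_scope.
Local Open Scope classical_set_scope.

Section Polytopes.
Variable R : realType.

Definition conv n (s : seq 'rV[R]_n) : set 'rV[R]_n :=
  [set x | exists w : 'I_(size s) -> R,
      (forall i, 0 <= w i) /\ \sum_i w i = 1 /\ x = \sum_i w i *: s`_i].

Definition is_polytope n (P : set 'rV[R]_n) : Prop :=
  exists s : seq 'rV[R]_n, P = conv s.

Definition vert n (X : set 'rV[R]_n) : set 'rV[R]_n :=
  [set x | X x /\ forall y z (t : R), X y -> X z -> 0 < t < 1 ->
      x = t *: y + (1 - t) *: z -> y = z].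

(* f : P -> Q is in Hom(P,Q): f restricted to P is the restriction of an
   affine map, and f maps P into Q.  Maps are identified by their values on P. *)
Definition is_hom n k (P : set 'rV[R]_n) (Q : set 'rV[R]_k)
    (f : 'rV[R]_n -> 'rV[R]_k) : Prop :=
  (exists (M : 'M[R]_(n, k)) (b : 'rV[R]_k), forall x, P x -> f x = x *m M + b)
  /\ (forall x, P x -> Q (f x)).

Definition vert_hom n k (P : set 'rV[R]_n) (Q : set 'rV[R]_k)
    (f : 'rV[R]_n -> 'rV[R]_k) : Prop :=
  is_hom P Q f /\
  forall g h (t : R), is_hom P Q g -> is_hom P Q h -> 0 < t < 1 ->
    (forall x, P x -> f x = t *: g x + (1 - t) *: h x) ->
    forall x, P x -> g x = h x.

Definition diamond m : set 'rV[R]_m :=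
  conv ([seq delta_mx 0 i | i : 'I_m] ++ [seq - delta_mx 0 i | i : 'I_m]).

End Polytopes.

From mathcomp Require Import all_boot all_order all_algebra.
From mathcomp Require Import classical_sets reals.
From mathcomp Require Import ring lra.
Set Implicit Arguments. Unset Strict Implicit. Unset Printing Implicit Defensive.
Import Order.TTheory GRing.Theory Num.Theory.
Local Open Scope ring_scope.
Local Open Scope classical_set_scope.

(* Let f be a vertex of Hom(◇_m, P) with P symmetric about f(0). If
   f(s e_i) = t y + (1 - t) z with y, z in P, then f is the same convex
   combination of the perturbations x |-> f(x) + (s x_i)(y - f(s e_i)) and
   x |-> f(x) + (s x_i)(z - f(s e_i)). These still map ◇_m into P, since an
   affine map only has to send the vertices ±e_j into P, and the symmetry of P
   takes care of -s e_i. Extremality of f forces y = z, so f(s e_i) is a vertex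
   of P. Part (c) applies this to P ∩ (2 f(0) - P), which contains f(◇_m)
   because f(-x) = 2 f(0) - f(x); part (a) holds as Hom(P, R) ⊆ Hom(P, Q). *)

Section Convexity.
Variables (R : realType) (n : nat).
Implicit Types (s : seq 'rV[R]_n) (C X : set 'rV[R]_n) (x y z : 'rV[R]_n).

Definition convex C :=
  forall x y (t : R), C x -> C y -> 0 <= t <= 1 -> C (t *: x + (1 - t) *: y).

Lemma convex_sum C k (w : 'I_k -> R) (p : 'I_k -> 'rV[R]_n) :
  convex C -> (forall i, 0 <= w i) -> \sum_i w i = 1 -> (forall i, C (p i)) ->
  C (\sum_i w i *: p i).
Proof.
move=> cC; elim: k w p => [|k IH] w p w_ge0 w1 pC.
  by move: w1; rewrite big_ord0 => /eqP; rewrite eq_sym oner_eq0.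
rewrite big_ord_recr /=; move: w1; rewrite big_ord_recr /=.
set r := \sum_(i < k) _ => w1.
have r_ge0 : 0 <= r by apply: sumr_ge0.
have -> : w ord_max = 1 - r by rewrite -w1 addrAC subrr add0r.
have [r0|r_neq0] := eqVneq r 0.
  rewrite big1 ?add0r ?r0 ?subr0 ?scale1r // => i _.
  by rewrite (psumr_eq0P (P := predT) (fun i _ => w_ge0 _) r0) ?scale0r.
rewrite (eq_bigr (fun i => r *: ((w (widen_ord (leqnSn k) i) / r)
                                  *: p (widen_ord (leqnSn k) i)))); last first.
  by move=> i _; rewrite scalerA mulrCA mulfV ?mulr1.
rewrite -scaler_sumr; apply: cC; [apply: IH | exact: pC |].
- by move=> i; rewrite divr_ge0.
- by rewrite -mulr_suml divff.
- by move=> i; exact: pC.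
- by rewrite r_ge0 /= -w1 lerDl.
Qed.

Lemma conv_convex s : convex (conv s).
Proof.
move=> _ _ t [v [v_ge0 [v1 ->]]] [w [w_ge0 [w1 ->]]] /andP[t_ge0 t_le1].
exists (fun i => t * v i + (1 - t) * w i); split; [|split].
- by move=> i; rewrite addr_ge0 // mulr_ge0 // subr_ge0.
- by rewrite big_split /= -!mulr_sumr v1 w1 !mulr1 subrKC.
- rewrite !scaler_sumr -big_split /=; apply: eq_bigr => i _.
  by rewrite !scalerA scalerDl.
Qed.

Lemma mem_conv s x : x \in s -> conv s x.
Proof.
move=> xs; pose j := Ordinal (etrans (index_mem x s) xs).
exists (fun i => (i == j)%:R); split; [|split].
- by move=> i; rewrite ler0n.
- by rewrite (bigD1 j) //= eqxx big1 ?addr0 // => i /negbTE ->.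
- rewrite (bigD1 j) //= eqxx scale1r big1 ?addr0 ?nth_index //.
  by move=> i /negbTE ->; rewrite scale0r.
Qed.

Lemma conv_sub_convex s C : convex C -> (forall x, x \in s -> C x) -> conv s `<=` C.
Proof.
move=> cC sC _ [w [w_ge0 [w1 ->]]]; apply: convex_sum => // i.
by apply: sC; rewrite mem_nth.
Qed.

Lemma conv_split s (w : 'I_(size s) -> R) j :
  (forall i, 0 <= w i) -> \sum_i w i = 1 -> w j < 1 ->
  exists2 z, conv s z & \sum_i w i *: s`_i = w j *: s`_j + (1 - w j) *: z.
Proof.
move=> w_ge0 w1 wj_lt1; have wj_neq1 : 1 - w j != 0 by rewrite subr_eq0 gt_eqF.
have rest1 : \sum_(i | i != j) w i = 1 - w j.
  by move: w1; rewrite (bigD1 j) //= => <-; rewrite addrAC subrr add0r.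
pose v i := if i == j then 0 else w i / (1 - w j).
exists (\sum_i v i *: s`_i).
  exists v; split; [|split] => //.
  - by move=> i; rewrite /v; case: eqP => // _; rewrite divr_ge0 // subr_ge0 ltW.
  rewrite (bigD1 j) //= /v eqxx add0r -[RHS](divff wj_neq1) -rest1 mulr_suml.
  by apply: eq_bigr => i /negbTE ->.
rewrite (bigD1 j) //= scaler_sumr [in RHS](bigD1 j) //= /v eqxx scale0r scaler0.
rewrite add0r; congr (_ + _); apply: eq_bigr => i /negbTE ->.
by rewrite scalerA mulrCA mulfV ?mulr1.
Qed.

Lemma vert_comb_eq X x y z (t : R) : vert X x -> X y -> X z -> 0 < t < 1 ->
  x = t *: y + (1 - t) *: z -> x = y.
Proof.
move=> [_ ext] Xy Xz t01 xE; have yz := ext y z t Xy Xz t01 xE.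
by rewrite xE -yz -scalerDl subrKC scale1r.
Qed.

Lemma vert_conv_mem s x : vert (conv s) x -> x \in s.
Proof.
move=> vx; have [[w [w_ge0 [w1 xE]]] _] := vx.
have [j wj_gt0] : exists j, 0 < w j.
  apply/existsP; apply: contra_eqT w1 => /existsPn w_le0.
  rewrite big1 => [|i _]; first by rewrite eq_sym oner_eq0.
  by apply/eqP; rewrite eq_le w_ge0 andbT leNgt w_le0.
suff -> : x = s`_j by rewrite mem_nth.
have : w j <= 1 by rewrite -w1 (bigD1 j) //= lerDl sumr_ge0.
rewrite le_eqVlt => /orP[/eqP wj1 | wj_lt1].
  have rest0 : \sum_(i | i != j) w i = 0.
    by move: w1; rewrite (bigD1 j) //= wj1 -{2}[1]addr0 => /addrI.
  rewrite xE (bigD1 j) //= wj1 scale1r big1 ?addr0 // => i ij.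
  by rewrite (psumr_eq0P (fun i _ => w_ge0 i) rest0) // scale0r.
have [z zs xz] := conv_split w_ge0 w1 wj_lt1; rewrite -xE in xz.
by apply: vert_comb_eq vx _ zs _ xz; [exact/mem_conv/mem_nth | apply/andP].
Qed.

Lemma vert_subset X Y x : X `<=` Y -> X x -> vert Y x -> vert X x.
Proof. by move=> XY Xx [_ ext]; split=> // y z t Xy Xz; apply: ext; apply: XY. Qed.

Lemma convexI X Y : convex X -> convex Y -> convex (X `&` Y).
Proof. by move=> cX cY x y t [Xx Yx] [Xy Yy] t01; split; [apply: cX | apply: cY]. Qed.

Lemma convex_reflect (c : 'rV[R]_n) X : convex X -> convex [set c - x | x in X].
Proof.
move=> cX _ _ t [x Xx <-] [y Xy <-] t01; exists (t *: x + (1 - t) *: y).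
  exact: cX.
by rewrite !scalerBr addrACA -scalerDl subrKC scale1r opprD.
Qed.

Lemma polytope_convex X : is_polytope X -> convex X.
Proof. by move=> [s ->]; apply: conv_convex. Qed.

End Convexity.

Lemma convex_comb_shift (R : comPzRingType) (V : lmodType R) (a u v w : V) (c t : R) :
  w = t *: u + (1 - t) *: v ->
  a = t *: (a + c *: (u - w)) + (1 - t) *: (a + c *: (v - w)).
Proof.
move=> wE.
have comb0 : t *: (u - w) + (1 - t) *: (v - w) = 0.
  by rewrite !scalerBr addrACA -opprD -scalerDl subrKC scale1r -wE subrr.
rewrite [t *: (a + _)]scalerDr [(1 - t) *: (a + _)]scalerDr addrACA.
rewrite -scalerDl subrKC scale1r !scalerA [t * c]mulrC [(1 - t) * c]mulrC.
by rewrite -!scalerA -scalerDr comb0 scaler0 addr0.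
Qed.

Section AffineMaps.
Variables (R : realType) (n k : nat) (M : 'M[R]_(n, k)) (b : 'rV[R]_k).
Implicit Types (s : seq 'rV[R]_n) (x y : 'rV[R]_n) (f : 'rV[R]_n -> 'rV[R]_k).

Lemma affine_convex_comb x y (t : R) :
  (t *: x + (1 - t) *: y) *m M + b = t *: (x *m M + b) + (1 - t) *: (y *m M + b).
Proof.
by rewrite mulmxDl -!scalemxAl !scalerDr addrACA -scalerDl subrKC scale1r.
Qed.

Lemma convex_preimage_affine (Q : set 'rV[R]_k) :
  convex Q -> convex [set x | Q (x *m M + b)].
Proof. by move=> cQ x y t Qx Qy t01; rewrite /= affine_convex_comb; apply: cQ. Qed.

Lemma is_hom_conv s (Q : set 'rV[R]_k) f :
  convex Q -> (forall x, conv s x -> f x = x *m M + b) ->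
  (forall x, x \in s -> Q (f x)) -> is_hom (conv s) Q f.
Proof.
move=> cQ fE sQ; split; first by exists M, b.
move=> x sx; rewrite fE //; move: x sx.
apply: conv_sub_convex; first exact: convex_preimage_affine.
by move=> x xs /=; rewrite -fE; [exact: sQ | exact: mem_conv].
Qed.

Lemma image_conv_affine s f : (forall x, conv s x -> f x = x *m M + b) ->
  f @` conv s = conv [seq x *m M + b | x <- s].
Proof.
move=> fE; apply/seteqP; split.
  move=> _ [x sx <-]; rewrite fE //; move: x sx.
  apply: conv_sub_convex; first by apply: convex_preimage_affine; apply: conv_convex.
  by move=> x xs; apply/mem_conv/map_f.
apply: conv_sub_convex.
  move=> _ _ t [x sx <-] [y sy <-] t01.
  exists (t *: x + (1 - t) *: y); first exact: conv_convex.
  by rewrite !fE ?affine_convex_comb //; apply: conv_convex.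
move=> _ /mapP[x xs ->]; exists x; first exact: mem_conv.
by rewrite fE //; apply: mem_conv.
Qed.

Lemma vert_image_conv_affine s f (v : 'rV[R]_k) :
  (forall x, conv s x -> f x = x *m M + b) ->
  vert (f @` conv s) v -> exists2 x, x \in s & f x = v.
Proof.
move=> fE; rewrite (image_conv_affine fE) => /vert_conv_mem /mapP[x xs ->].
by exists x => //; apply/fE/mem_conv.
Qed.

Lemma affine_opp (D : set 'rV[R]_n) f x :
  (forall x, D x -> f x = x *m M + b) -> D 0 -> D x -> D (- x) ->
  f (- x) = 2%:R *: f 0 - f x.
Proof.
move=> fE D0 Dx Dnx; rewrite !fE // mul0mx add0r mulNmx scaler_nat mulr2n.
by rewrite opprD addrACA subrr addr0 addrC.
Qed.

End AffineMaps.

Lemma vert_hom_subset (R : realType) n k (P : set 'rV[R]_n) (Q Q' : set 'rV[R]_k) f :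
  Q' `<=` Q -> vert_hom P Q f -> f @` P `<=` Q' -> vert_hom P Q' f.
Proof.
move=> Q'Q [[aff _] ext] fPQ'; split; first by split=> // x Px; apply: fPQ'; exists x.
move=> g h t [g_aff gQ'] [h_aff hQ'] t01 fE; apply: (ext g h t) => //.
  by split=> // x Px; apply/Q'Q/gQ'.
by split=> // x Px; apply/Q'Q/hQ'.
Qed.

Lemma sqr_eq1_eq_or_opp (R : idomainType) (s t : R) :
  s ^+ 2 = 1 -> t ^+ 2 = 1 -> t = s \/ t = - s.
Proof.
move=> /eqP; rewrite sqrf_eq1 => /orP[]/eqP-> /eqP; rewrite sqrf_eq1.
  by case/orP=> /eqP->; [left | right].
by case/orP=> /eqP->; [right; rewrite opprK | left].
Qed.

Section Diamond.
Variables (R : realType) (m : nat).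
Implicit Types (x y z : 'rV[R]_m) (s : R).

Definition cross_vertices : seq 'rV[R]_m :=
  [seq delta_mx 0 i | i : 'I_m] ++ [seq - delta_mx 0 i | i : 'I_m].

Lemma mem_cross_vertices x :
  x \in cross_vertices <-> exists i s, s ^+ 2 = 1 /\ x = s *: delta_mx 0 i.
Proof.
split.
  rewrite mem_cat => /orP[] /mapP[i _ ->]; exists i.
    by exists 1; rewrite expr1n scale1r.
  by exists (-1); rewrite sqrrN expr1n scaleN1r.
move=> [i [s [/eqP s2 ->]]]; rewrite mem_cat.
move: s2; rewrite sqrf_eq1 => /orP[]/eqP->; apply/orP.
  by left; rewrite scale1r; apply/mapP; exists i; rewrite ?mem_enum.
by right; rewrite scaleN1r; apply/mapP; exists i; rewrite ?mem_enum.
Qed.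

Lemma diamond_signed_unit i s : s ^+ 2 = 1 -> @diamond R m (s *: delta_mx 0 i).
Proof. by move=> s2; apply/mem_conv/mem_cross_vertices; exists i, s. Qed.

Lemma diamond_opp x : @diamond R m x -> @diamond R m (- x).
Proof.
have -> : - x = x *m (- 1%:M) + 0 by rewrite addr0 mulmxN mulmx1.
move: x; apply: conv_sub_convex.
  by apply: convex_preimage_affine; apply: conv_convex.
move=> x /mem_cross_vertices[i [s [s2 ->]]] /=.
by rewrite addr0 mulmxN mulmx1 -scaleNr; apply: diamond_signed_unit; rewrite sqrrN.
Qed.

Lemma diamond0 (i : 'I_m) : @diamond R m 0.
Proof.
have := conv_convex (diamond_signed_unit i (expr1n _ 2))
  (diamond_opp (diamond_signed_unit i (expr1n _ 2))) (t := 2^-1).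
have -> : 1 - 2^-1 = 2^-1 :> R by field.
by rewrite scalerN subrr; apply; rewrite invr_ge0 ler0n /= invf_le1 ?ler1n.
Qed.

Definition l1 x : R := \sum_i `|x 0 i|.

Lemma convex_l1_ball : convex [set x | l1 x <= 1].
Proof.
move=> x y t /= x1 y1 /andP[t_ge0 t_le1].
have t'_ge0 : 0 <= 1 - t by rewrite subr_ge0.
apply: (@le_trans _ _ (t * l1 x + (1 - t) * l1 y)).
  rewrite /l1 !mulr_sumr -big_split /=; apply: ler_sum => i _; rewrite !mxE.
  apply: le_trans (ler_normD _ _) _.
  by rewrite !normrM (ger0_norm t_ge0) (ger0_norm t'_ge0).
by rewrite -[leRHS](subrKC t) lerD // ler_piMr.
Qed.

Lemma l1_diamond x : @diamond R m x -> l1 x <= 1.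
Proof.
move: x; apply: conv_sub_convex; first exact: convex_l1_ball.
move=> x /mem_cross_vertices[i [s [s2 ->]]] /=; rewrite /l1 (bigD1 i) //= big1.
  have /eqP := s2; rewrite sqr_norm_eq1 => /eqP norm_s.
  by rewrite !mxE !eqxx /= mulr1 addr0 norm_s.
by move=> j /negbTE ji; rewrite !mxE ji andbF mulr0 normr0.
Qed.

Lemma diamond_signed_coord_le1 x i s : s ^+ 2 = 1 -> @diamond R m x -> s * x 0 i <= 1.
Proof.
move=> /eqP; rewrite sqr_norm_eq1 => /eqP norm_s /l1_diamond x1.
apply: le_trans (ler_norm _) _; rewrite normrM norm_s mul1r.
by apply: le_trans x1; rewrite /l1 (bigD1 i) //= lerDl sumr_ge0.
Qed.

Lemma l1_le1_signed_unit x i s : s ^+ 2 = 1 -> l1 x <= 1 -> s * x 0 i = 1 ->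
  x = s *: delta_mx 0 i.
Proof.
move=> s2 x1 sxi; have /eqP := s2; rewrite sqr_norm_eq1 => /eqP norm_s.
have norm_xi : `|x 0 i| = 1 by rewrite -[LHS]mul1r -norm_s -normrM sxi normr1.
have rest0 : \sum_(j | j != i) `|x 0 j| = 0.
  apply/eqP; rewrite eq_le sumr_ge0 // andbT.
  by move: x1; rewrite /l1 (bigD1 i) //= norm_xi -lerBrDl subrr.
apply/matrixP => a j; rewrite ord1 !mxE eqxx /=; have [->|ji] := eqVneq j i.
  by rewrite mulr1 -[LHS]mul1r -s2 expr2 -mulrA sxi mulr1.
by rewrite mulr0; apply/normr0_eq0/(psumr_eq0P _ rest0).
Qed.

Lemma vert_diamond_signed_unit i s :
  s ^+ 2 = 1 -> vert (@diamond R m) (s *: delta_mx 0 i).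
Proof.
move=> s2; split=> [|y z t dy dz /andP[t_gt0 t_lt1] e].
  exact: diamond_signed_unit.
have syi := diamond_signed_coord_le1 i s2 dy.
have szi := diamond_signed_coord_le1 i s2 dz.
have s_comb : s = t * y 0 i + (1 - t) * z 0 i.
  by move/matrixP: e => /(_ 0 i); rewrite !mxE !eqxx /= mulr1.
have one_comb : 1 = t * (s * y 0 i) + (1 - t) * (s * z 0 i).
  by rewrite mulrCA [(1 - t) * _]mulrCA -mulrDr -s_comb -expr2 s2.
have syi1 : s * y 0 i = 1 by nra.
have szi1 : s * z 0 i = 1 by nra.
by rewrite (l1_le1_signed_unit s2 (l1_diamond dy) syi1)
           (l1_le1_signed_unit s2 (l1_diamond dz) szi1).
Qed.

Lemma vert_diamondP x :
  vert (@diamond R m) x -> exists i s, s ^+ 2 = 1 /\ x = s *: delta_mx 0 i.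
Proof. by move=> /vert_conv_mem /mem_cross_vertices. Qed.

End Diamond.

Lemma mulmx_delta_col (R : pzRingType) m k (x : 'rV[R]_m) i (u : 'rV[R]_k) :
  x *m (delta_mx i 0 *m u) = x 0 i *: u.
Proof. by rewrite mulmxA -colE [col i x]mx11_scalar mul_scalar_mx mxE. Qed.

Section CentrallySymmetricTarget.
Variables (R : realType) (m k : nat) (P : set 'rV[R]_k) (f : 'rV[R]_m -> 'rV[R]_k).
Hypothesis convex_P : convex P.
Hypothesis symmetric_P : forall y, P y -> P (2%:R *: f 0 - y).

Lemma is_hom_diamond_perturb i s y :
  s ^+ 2 = 1 -> P y -> is_hom (@diamond R m) P f ->
  is_hom (@diamond R m) P (fun x => f x + (s * x 0 i) *: (y - f (s *: delta_mx 0 i))).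
Proof.
move=> s2 Py [[M [b fE]] fP]; set u := y - _.
apply: (is_hom_conv (M := M + s *: (delta_mx i 0 *m u)) (b := b)) => // x.
  by move=> dx; rewrite fE // mulmxDr -scalemxAr mulmx_delta_col scalerA addrAC.
move=> /mem_cross_vertices[j [t [t2 ->]]]; rewrite !mxE eqxx /=.
have [<-{j}|ji] := eqVneq i j; last first.
  by rewrite mulr0 mulr0 scale0r addr0; apply/fP/diamond_signed_unit.
have [->|->] := sqr_eq1_eq_or_opp s2 t2; rewrite mulr1.
  by rewrite -expr2 s2 scale1r /u addrC subrK.
rewrite mulrN -expr2 s2 scaleN1r scaleNr (affine_opp fE) /u.
- by rewrite opprB addrA subrK; apply: symmetric_P.
- exact: diamond0 _ i.
- exact: diamond_signed_unit.
- by rewrite -scaleNr; apply: diamond_signed_unit; rewrite sqrrN.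
Qed.

Lemma vert_hom_diamond_vert i s : s ^+ 2 = 1 -> vert_hom (@diamond R m) P f ->
  vert P (f (s *: delta_mx 0 i)).
Proof.
move=> s2 [f_hom ext]; have di := diamond_signed_unit i s2.
split=> [|y z t Py Pz t01 fE]; first exact: f_hom.2.
have := ext _ _ t (is_hom_diamond_perturb i s2 Py f_hom)
  (is_hom_diamond_perturb i s2 Pz f_hom) t01.
move=> /(_ (fun x _ => convex_comb_shift _ _ fE)) /(_ _ di).
by rewrite !mxE !eqxx /= mulr1 -expr2 s2 !scale1r ![f _ + _]addrC !subrK.
Qed.

End CentrallySymmetricTarget.

Lemma vert_image_diamond_sub (R : realType) m k (Q : set 'rV[R]_k) f :
  is_hom (@diamond R m) Q f ->
  vert (f @` @diamond R m) `<=` f @` vert (@diamond R m).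
Proof.
move=> [[M [b fE]] _] y /(vert_image_conv_affine fE)[x].
move=> /mem_cross_vertices[i [s [s2 ->]]] <-.
by exists (s *: delta_mx 0 i) => //; apply: vert_diamond_signed_unit.
Qed.

Lemma vert_image_diamond (R : realType) m k (P : set 'rV[R]_k) f :
  (0 < m)%N -> convex P -> vert_hom (@diamond R m) P f ->
  f @` vert (@diamond R m) = vert (f @` @diamond R m) /\
  vert (f @` @diamond R m) `<=` vert (P `&` [set 2%:R *: f 0 - x | x in P]).
Proof.
move=> m_gt0 cP vf; have [[[M [b fE]] fP] _] := vf.
set S := P `&` _.
have f_opp x : @diamond R m x -> f (- x) = 2%:R *: f 0 - f x.
  move=> dx; have d0 := diamond0 R (Ordinal m_gt0).
  exact: affine_opp fE d0 dx (diamond_opp dx).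
have fS : f @` @diamond R m `<=` S.
  move=> _ [x dx <-]; split; first exact: fP.
  by exists (f (- x)); [apply/fP/diamond_opp | rewrite f_opp // opprB subrKC].
have symS y : S y -> S (2%:R *: f 0 - y).
  by move=> [Py [x Px xy]]; split; [rewrite -xy opprB subrKC | exists y].
have vS : f @` vert (@diamond R m) `<=` vert S.
  move=> _ [x /vert_diamondP[i [s [s2 ->]]] <-].
  apply: (vert_hom_diamond_vert (convexI cP (convex_reflect cP)) symS i s2).
  by apply: (vert_hom_subset _ vf fS) => y [].
have image_vert : f @` vert (@diamond R m) = vert (f @` @diamond R m).
  apply/seteqP; split; last exact: vert_image_diamond_sub vf.1.
  move=> _ [x vx <-]; apply: vert_subset fS _ (vS _ _); last by exists x.
  by exists x => //; case: vx.
by split=> //; rewrite -image_vert.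
Qed.

Theorem corollary3p2 (R : realType) :
  (* (a) *)
  (forall (n k : nat) (P : set 'rV[R]_n) (Rr Q : set 'rV[R]_k)
          (f : 'rV[R]_n -> 'rV[R]_k),
     is_polytope P -> is_polytope Rr -> is_polytope Q -> Rr `<=` Q ->
     vert_hom P Q f -> f @` P `<=` Rr -> vert_hom P Rr f) /\
  (* (b) *)
  (forall (m k : nat) (P : set 'rV[R]_k) (f : 'rV[R]_m -> 'rV[R]_k),
     (2 <= m)%N -> is_polytope P ->
     (forall x, P x <-> P (2%:R *: f 0 - x)) ->
     vert_hom (@diamond R m) P f ->
     f @` vert (@diamond R m) `<=` vert P) /\
  (* (c) *)
  (forall (m k : nat) (P : set 'rV[R]_k) (f : 'rV[R]_m -> 'rV[R]_k),
     (2 <= m)%N -> is_polytope P ->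
     vert_hom (@diamond R m) P f ->
     f @` vert (@diamond R m) = vert (f @` @diamond R m) /\
     vert (f @` @diamond R m)
       `<=` vert (P `&` [set 2%:R *: f 0 - x | x in P])).
Proof.
split; first by move=> n k P Rr Q f _ _ _; apply: vert_hom_subset.
split.
  move=> m k P f _ /polytope_convex cP symP vf v [x].
  move=> /vert_diamondP[i [s [s2 ->]]] <-.
  by apply: (vert_hom_diamond_vert cP _ i s2 vf) => y /symP.
(* [2 <= m] is only needed as [0 < m], which makes 0 a point of ◇_m. *)
move=> m k P f m_ge2 /polytope_convex cP; apply: vert_image_diamond => //.
exact: leq_trans m_ge2.
Qed.
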